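(* Let $H$ be a complex Hilbert space, $E$ a finite-dimensional subspace of $H$ and $F$ a subspace of $E$. Then for any unitary operator $u$ on $H$ which fixes each element of $E^{\perp}$, there exists a unique unitary operator $\pi_{E,F}(u)$ on $H$ such that: (i) $\pi_{E,F}(u)$ fixes each element of $F^{\perp}$; (ii) the image of $H$ by $u - \pi_{E,F}(u)$ is included in the image of $F^{\perp}$ by $u - \mathrm{Id}$. Moreover, if $G$ is a subspace of $F$, then $\pi_{F,G}(\pi_{E,F}(u))$ is well-defined and equals $\pi_{E,G}(u)$. *)

From HB Require Import structures.
From mathcomp Require Import all_boot all_order all_algebra.
From mathcomp Require Import reals.
From mathcomp.real_closed Require Import complex.
Set Implicit Arguments.
Unset Strict Implicit.
Unset Printing Implicit Defensive.
Import Order.TTheory GRing.Theory Num.Theory.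
Local Open Scope ring_scope.

Section Hilbert.
Variable R : realType.
Variable V : lmodType R[i].
(* inner product, linear in the first argument, conjugate-linear in the second *)
Variable ip : V -> V -> R[i].

Definition is_inner_product : Prop :=
  [/\ (forall a x y z, ip (a *: x + y) z = a * ip x z + ip y z),
      (forall x y, ip y x = (ip x y)^*),
      (forall x, 0 <= ip x x) &
      (forall x, ip x x = 0 -> x = 0)].

(* completeness for the norm ||x|| = sqrt <x,x> (squared distances used) *)
Definition ip_complete : Prop :=
  forall s : nat -> V,
    (forall e : R[i], 0 < e -> exists N, forall n m, (N <= n)%N -> (N <= m)%N ->
        `|ip (s n - s m) (s n - s m)| < e) ->
    exists l : V, forall e : R[i], 0 < e -> exists N, forall n, (N <= n)%N ->
        `|ip (s n - l) (s n - l)| < e.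

Definition is_hilbert : Prop := is_inner_product /\ ip_complete.

Definition is_subspace (S : V -> Prop) : Prop :=
  S 0 /\ forall a x y, S x -> S y -> S (a *: x + y).

Definition in_span (s : seq V) (x : V) : Prop :=
  exists c : 'I_(size s) -> R[i], x = \sum_(i < size s) c i *: s`_i.

Definition is_fd_subspace (S : V -> Prop) : Prop :=
  is_subspace S /\ exists s : seq V, forall x, S x <-> in_span s x.

Definition subspace_le (S T : V -> Prop) : Prop := forall x, S x -> T x.

Definition orth (S : V -> Prop) (x : V) : Prop := forall y, S y -> ip x y = 0.

Definition unitary (u : V -> V) : Prop :=
  [/\ (forall a x y, u (a *: x + y) = a *: u x + u y),
      bijective u &
      (forall x y, ip (u x) (u y) = ip x y)].

Definition fixes (u : V -> V) (S : V -> Prop) : Prop := forall x, S x -> u x = x.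

(* p satisfies the defining properties of pi_{E,F}(u):
   p unitary, (i) p fixes F^perp, (ii) (u - p)(H) is included in (u - Id)(F^perp) *)
Definition is_piEF (F : V -> Prop) (u p : V -> V) : Prop :=
  [/\ unitary p, fixes p (orth F) &
      (forall x, exists y, orth F y /\ u x - p x = u y - y)].

End Hilbert.

(* Write T := u - Id.  For a unitary u, T x is orthogonal to every fixed vector
   of u, and a vector y with <T y, y> = 0 is fixed by u.  The value of
   π_{E,F}(u) at v is forced to be u v - T y with y in F^⊥ such that
   T v - T y is orthogonal to F^⊥.  Such a y exists because the problem lives
   in the finite-dimensional space K = E ∩ F^⊥: the projection of T v onto
   K lies in the projection of T(K), since a vector of K orthogonal to the latter
   is fixed by u, hence orthogonal to T v, hence zero.  It is unique because two
   candidates differ by some T y orthogonal to y.  Linearity, isometry and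
   invertibility of π_{E,F}(u) follow from this uniqueness (applied to u and to
   u^-1), and π_{F,G}(π_{E,F}(u)) satisfies the conditions defining
   π_{E,G}(u). *)

From HB Require Import structures.
From mathcomp Require Import all_boot all_order all_algebra.
From mathcomp Require Import reals.
From mathcomp.real_closed Require Import complex.
From Stdlib Require Import Classical ClassicalEpsilon FunctionalExtensionality.
Import Order.TTheory GRing.Theory Num.Theory.
Local Open Scope ring_scope.
Set Implicit Arguments.
Unset Strict Implicit.

Lemma subr_eq_subr (V : zmodType) (a b c d : V) : a - b = c - d -> b = (a - c) + d.
Proof. by move=> e; rewrite -addrA [- c + d]addrC -opprB -e opprB subrKC. Qed.

Section Linear.
Variables (R : pzRingType) (V : lmodType R).

Lemma subr_ZD a (x y x' y' : V) :
  (a *: x + y) - (a *: x' + y') = a *: (x - x') + (y - y').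
Proof. by rewrite scalerBr opprD addrACA. Qed.

Lemma linear_subr (u : V -> V) : linear u -> forall x y, u (x - y) = u x - u y.
Proof. by move=> hu x y; rewrite -scaleN1r addrC hu scaleN1r addrC. Qed.

Lemma linear_map0 (u : V -> V) : linear u -> u 0 = 0.
Proof.
move=> hu; have := hu 1 0 0; rewrite !scale1r addr0 => h.
by apply: (@addrI _ (u 0)); rewrite -h addr0.
Qed.

Definition disp (u : V -> V) (x : V) := u x - x.

Lemma disp_linear u : linear u -> linear (disp u).
Proof. by move=> hu a x y; rewrite /disp hu subr_ZD. Qed.

End Linear.

Section InnerProduct.
Variables (R : realType) (V : lmodType R[i]) (ip : V -> V -> R[i]).
Hypothesis hip : is_inner_product ip.

Lemma ipZDl a x y z : ip (a *: x + y) z = a * ip x z + ip y z.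
Proof. by case: hip => h _ _ _; apply: h. Qed.

Lemma ipC x y : ip y x = (ip x y)^*.
Proof. by case: hip => _ h _ _; apply: h. Qed.

Lemma ip_eq0 x : ip x x = 0 -> x = 0.
Proof. by case: hip => _ _ _ h; apply: h. Qed.

Lemma ipDl x y z : ip (x + y) z = ip x z + ip y z.
Proof. by rewrite -[x]scale1r ipZDl mul1r scale1r. Qed.

Lemma ip0l z : ip 0 z = 0.
Proof. by apply: (@addrI _ (ip 0 z)); rewrite addr0 -ipDl addr0. Qed.

Lemma ipZl a x z : ip (a *: x) z = a * ip x z.
Proof. by rewrite -[a *: x]addr0 ipZDl ip0l addr0. Qed.

Lemma ipBl x y z : ip (x - y) z = ip x z - ip y z.
Proof. by rewrite -scaleN1r addrC ipZDl mulN1r addrC. Qed.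

Lemma ip0r z : ip z 0 = 0.
Proof. by rewrite ipC ip0l conjC0. Qed.

Lemma ipDr x y z : ip z (x + y) = ip z x + ip z y.
Proof. by rewrite ipC ipDl rmorphD (ipC x z) (ipC y z). Qed.

Lemma ipZr a x z : ip z (a *: x) = a^* * ip z x.
Proof. by rewrite ipC ipZl rmorphM (ipC x z). Qed.

Lemma ip_eq0C x y : ip x y = 0 -> ip y x = 0.
Proof. by move=> h; rewrite ipC h conjC0. Qed.

(* Expanding ||g y||^2 = ||y + (g y - y)||^2 leaves ||g y - y||^2 = 0. *)
Lemma isometry_fix_of_orth (g : V -> V) y :
  ip (g y) (g y) = ip y y -> ip (disp g y) y = 0 -> g y = y.
Proof.
move=> giso; rewrite /disp => hd; apply/eqP; rewrite -subr_eq0; apply/eqP; apply: ip_eq0.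
have eg : g y = y + (g y - y) by rewrite addrC subrK.
move: (g y - y) hd eg giso => d hd ->.
rewrite !ipDl !ipDr hd (ip_eq0C hd) addr0 add0r => /eqP.
by rewrite -subr_eq0 addrC addKr => /eqP.
Qed.

Lemma orth_subspace (S : V -> Prop) : is_subspace (orth ip S).
Proof.
split=> [y _|a x y hx hy z hz]; first exact: ip0l.
by rewrite ipZDl hx // hy // mulr0 addr0.
Qed.

End InnerProduct.

Section Subspace.
Variables (R : realType) (V : lmodType R[i]) (S : V -> Prop).
Hypothesis hS : is_subspace S.

Lemma subspace0 : S 0.
Proof. by case: hS. Qed.

Lemma subspaceZD a x y : S x -> S y -> S (a *: x + y).
Proof. by case: hS => _; apply. Qed.

Lemma subspaceD x y : S x -> S y -> S (x + y).
Proof. by move=> hx hy; have := subspaceZD 1 hx hy; rewrite scale1r. Qed.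

Lemma subspaceZ a x : S x -> S (a *: x).
Proof. by move=> hx; rewrite -[_ *: _]addr0; apply: subspaceZD hx subspace0. Qed.

Lemma subspaceB x y : S x -> S y -> S (x - y).
Proof. by move=> hx hy; rewrite -scaleN1r addrC; apply: subspaceZD. Qed.

End Subspace.

Lemma subspaceI (R : realType) (V : lmodType R[i]) (S T : V -> Prop) :
  is_subspace S -> is_subspace T -> is_subspace (fun x => S x /\ T x).
Proof.
move=> hS hT; split=> [|a x y [Sx Tx] [Sy Ty]]; first by split; apply: subspace0.
by split; apply: subspaceZD.
Qed.

Section Span.
Variables (R : realType) (V : lmodType R[i]).
Implicit Types (s : seq V) (x : V).

Lemma in_span_nil x : in_span [::] x <-> x = 0.
Proof.
split=> [[c ->]|->]; first by rewrite big_ord0.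
by exists (fun=> 0); rewrite big_ord0.
Qed.

Lemma in_span_cons a s x : in_span (a :: s) x <-> exists c, in_span s (x - c *: a).
Proof.
split=> [[c ->]|[c0 [c hc]]].
  exists (c ord0), (fun i => c (lift ord0 i)).
  by rewrite big_ord_recl addrAC subrr add0r.
exists (fun i => if unlift ord0 i is Some j then c j else c0).
rewrite big_ord_recl /= unlift_none.
under eq_bigr => i _ do rewrite liftK.
by rewrite -hc addrC subrK.
Qed.

Lemma in_span_subspace s : is_subspace (in_span s).
Proof.
split; first by exists (fun=> 0); rewrite big1 // => i _; rewrite scale0r.
move=> a _ _ [c ->] [d ->]; exists (fun i => a * c i + d i).
by rewrite scaler_sumr -big_split; apply: eq_bigr => i _; rewrite scalerDl scalerA.
Qed.

Lemma subspace_in_span_finite s (S : V -> Prop) :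
  is_subspace S -> subspace_le S (in_span s) ->
  exists t, forall x, S x <-> in_span t x.
Proof.
elim: s S => [|a s IH] S hS hSs.
  exists [::] => x; split; first exact: hSs.
  by move/in_span_nil ->; apply: subspace0.
have hs := in_span_subspace s.
have [t ht] := IH _ (subspaceI hS hs) (fun x h => h.2).
have [hall|] := classic (subspace_le S (in_span s)).
  by exists t => x; rewrite -ht; split=> [Sx|[]//]; split=> //; apply: hall.
move=> /not_all_ex_not [x0 /(imply_to_and (S x0))[Sx0 nsx0]].
have [c0 hc0] := (in_span_cons _ _ _).1 (hSs _ Sx0).
have c0_neq0 : c0 != 0.
  by apply: contra_notN nsx0 => /eqP c00; move: hc0; rewrite c00 scale0r subr0.
exists (x0 :: t) => x; rewrite in_span_cons; split=> [Sx|[d /ht [Sxd _]]].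
  have [c hc] := (in_span_cons _ _ _).1 (hSs _ Sx).
  exists (c / c0); apply/ht; split; first by apply: subspaceB => //; apply: subspaceZ.
  have -> : x - (c / c0) *: x0 = (x - c *: a) - (c / c0) *: (x0 - c0 *: a).
    by rewrite scalerBr scalerA divfK // opprB addrA subrK.
  by apply: (subspaceB hs hc); apply: (subspaceZ hs _ hc0).
by rewrite -(subrK (d *: x0) x); apply: subspaceD => //; apply: subspaceZ.
Qed.

Lemma fd_subspace_le (S T : V -> Prop) :
  is_fd_subspace T -> is_subspace S -> subspace_le S T -> is_fd_subspace S.
Proof.
move=> [_ [s hs]] hS hST; split=> //.
by apply: (@subspace_in_span_finite s) => // x /hST /hs.
Qed.

End Span.

Section Projection.
Variables (R : realType) (V : lmodType R[i]) (ip : V -> V -> R[i]).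
Hypothesis hip : is_inner_product ip.

Lemma in_span_proj s x : exists y, in_span s y /\ orth ip (in_span s) (x - y).
Proof.
elim: s x => [|a s IH] x.
  by exists 0; split=> [|z /in_span_nil ->]; [apply/in_span_nil | apply: ip0r].
have hs := in_span_subspace s.
have orth_cons w : orth ip (in_span s) w -> ip w a = 0 -> orth ip (in_span (a :: s)) w.
  move=> hw hwa z /in_span_cons [d hd].
  by rewrite -(subrK (d *: a) z) (ipDr hip) (ipZr hip) hwa mulr0 addr0 hw.
have [pa [spa opa]] := IH a; have [px [spx opx]] := IH x.
set b := a - pa.
have [bb0|bb_neq0] := eqVneq (ip b b) 0.
  have ea : a = pa by apply/eqP; rewrite -subr_eq0; apply/eqP; apply: ip_eq0 hip _ bb0.
  exists px; split; first by apply/in_span_cons; exists 0; rewrite scale0r subr0.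
  by apply: orth_cons => //; rewrite ea; apply: opx.
pose c : R[i] := ip x b / ip b b.
exists (px + c *: b); split.
  apply/in_span_cons; exists c.
  have -> : px + c *: b - c *: a = px - c *: pa.
    by rewrite /b scalerBr addrA addrAC addrK.
  by apply: (subspaceB hs spx); apply: (subspaceZ hs c spa).
have ex : x - (px + c *: b) = (x - px) - c *: b by rewrite opprD addrA.
have ox : orth ip (in_span s) (x - (px + c *: b)).
  by move=> z hz; rewrite ex (ipBl hip) (ipZl hip) opx // opa // mulr0 subr0.
apply: orth_cons => //; rewrite -(subrK pa a) -/b (ipDr hip) (ox _ spa) addr0.
rewrite ex (ipBl hip) (ipZl hip) (ipBl hip) (ip_eq0C hip (opa _ spx)) subr0.
by rewrite /c divfK // subrr.
Qed.

Lemma fd_subspace_proj S : is_fd_subspace S ->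
  forall x, exists y, S y /\ orth ip S (x - y).
Proof.
move=> [_ [s hs]] x; have [y [sy oy]] := in_span_proj s x.
by exists y; split=> [|z /hs]; [apply/hs | apply: oy].
Qed.

End Projection.

Section Displacement.
Variables (R : realType) (V : lmodType R[i]) (ip : V -> V -> R[i]).
Hypothesis hip : is_inner_product ip.
Variable u : V -> V.
Hypotheses (u_lin : linear u) (u_iso : forall x y, ip (u x) (u y) = ip x y).

Lemma disp_orth_fixed x z : u z = z -> ip (disp u x) z = 0.
Proof. by move=> uz; rewrite (ipBl hip) -{1}uz u_iso subrr. Qed.

Section FiniteDimensional.
Variable K : V -> Prop.
Hypothesis hK : is_fd_subspace K.

(* P_K (disp u (K)), where P_K is the orthogonal projection onto K. *)
Definition disp_proj_image (m : V) : Prop :=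
  K m /\ exists y, K y /\ orth ip K (disp u y - m).

Lemma disp_proj_image_fd : is_fd_subspace disp_proj_image.
Proof.
have hKs := hK.1.
apply: (fd_subspace_le hK) => [|m []//]; split.
  split; first exact: subspace0.
  exists 0; split=> [|k _]; first exact: subspace0.
  by rewrite subr0 /disp linear_map0 // subrr ip0l.
move=> a m1 m2 [Km1 [y1 [Ky1 o1]]] [Km2 [y2 [Ky2 o2]]].
split; first exact: subspaceZD.
exists (a *: y1 + y2); split; first exact: subspaceZD.
by move=> k hk; rewrite disp_linear // subr_ZD (ipZDl hip) o1 // o2 // mulr0 addr0.
Qed.

Lemma fixed_of_orth_disp_proj_image w :
  K w -> orth ip disp_proj_image w -> u w = w.
Proof.
move=> Kw ow; apply: (isometry_fix_of_orth hip (u_iso w w)); apply: (ip_eq0C hip).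
have [m [Km om]] := fd_subspace_proj hip hK (disp u w).
rewrite -(subrK m (disp u w)) (ipDr hip) (ip_eq0C hip (om _ Kw)) add0r.
by apply: ow; split=> //; exists w.
Qed.

Lemma disp_proj_range v : exists y, K y /\ orth ip K (disp u v - disp u y).
Proof.
have hKs := hK.1.
have [z [Kz oz]] := fd_subspace_proj hip hK (disp u v).
have [r [Mr or]] := fd_subspace_proj hip disp_proj_image_fd z.
have Kzr : K (z - r) by apply: subspaceB => //; case: Mr.
have fix_zr := fixed_of_orth_disp_proj_image Kzr or.
have z_orth : ip z (z - r) = 0.
  have -> : ip z (z - r) = ip (disp u v) (z - r) - ip (disp u v - z) (z - r).
    by rewrite (ipBl hip (disp u v) z) opprB subrKC.
  by rewrite (disp_orth_fixed _ fix_zr) oz // subrr.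
have zr : z = r.
  apply/eqP; rewrite -subr_eq0; apply/eqP; apply: (ip_eq0 hip).
  by rewrite (ipBl hip) z_orth (ip_eq0C hip (or _ Mr)) subrr.
move: Mr; rewrite -zr => -[_ [y [Ky oy]]]; exists y; split=> // k hk.
have -> : disp u v - disp u y = (disp u v - z) - (disp u y - z).
  by rewrite (opprB (disp u y) z) addrA subrK.
by rewrite (ipBl hip) oz // oy // subrr.
Qed.

End FiniteDimensional.
End Displacement.

Section PiValue.
Variables (R : realType) (V : lmodType R[i]) (ip : V -> V -> R[i]).
Hypothesis hip : is_inner_product ip.
Variable F : V -> Prop.

(* The conditions on the value w at v of π_{E,F}(u); (i) enters as
   <w, z> = <v, z> for z in F^⊥, which any unitary fixing F^⊥ satisfies. *)
Definition pi_value (u : V -> V) (v w : V) : Prop :=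
  (exists y, orth ip F y /\ u v - w = disp u y) /\
  (forall z, orth ip F z -> ip w z = ip v z).

Lemma pi_value_of_piEF u p : is_piEF ip F u p -> forall v, pi_value u v (p v).
Proof.
case=> [[_ _ p_iso] p_fix p_range] v; split; first exact: p_range.
by move=> z hz; rewrite -{1}(p_fix z hz) p_iso.
Qed.

Lemma pi_value_inv u g v w :
  linear g -> cancel u g -> pi_value u v w -> pi_value g w v.
Proof.
move=> g_lin uK [[y [Fy e]] c]; split=> [|z hz]; last by rewrite c.
exists y; split=> //; have := congr1 g e.
by rewrite /disp !(linear_subr g_lin) !uK => /(congr1 -%R); rewrite !opprB.
Qed.

Variable u : V -> V.
Hypotheses (u_lin : linear u) (u_iso : forall x y, ip (u x) (u y) = ip x y).

Lemma pi_value_uniq v w1 w2 : pi_value u v w1 -> pi_value u v w2 -> w1 = w2.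
Proof.
move=> [[y1 [o1 e1]] c1] [[y2 [o2 e2]] c2].
have e : w1 - w2 = disp u (y2 - y1).
  rewrite (linear_subr (disp_linear u_lin)) -e1 -e2.
  by rewrite (opprB (u v) w1) [RHS]addrC subrKA.
have o : orth ip F (y2 - y1) := subspaceB (orth_subspace hip F) o2 o1.
have fixed : u (y2 - y1) = y2 - y1.
  by apply: (isometry_fix_of_orth hip (u_iso _ _)); rewrite -e (ipBl hip) c1 // c2 // subrr.
by apply/eqP; rewrite -subr_eq0 e /disp fixed subrr.
Qed.

Section PointwiseSolution.
Variable p : V -> V.
Hypothesis hp : forall v, pi_value u v (p v).

Lemma pi_value_linear : linear p.
Proof.
move=> a v1 v2; symmetry; apply: pi_value_uniq (hp _).
have [[y1 [o1 e1]] c1] := hp v1; have [[y2 [o2 e2]] c2] := hp v2.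
split=> [|z hz]; last by rewrite !(ipZDl hip) c1 // c2.
exists (a *: y1 + y2); split; first exact (subspaceZD (orth_subspace hip F) a o1 o2).
by rewrite u_lin subr_ZD e1 e2 (disp_linear u_lin).
Qed.

Lemma pi_value_isometry x y : ip (p x) (p y) = ip x y.
Proof.
have [[y1 [o1 e1]] c1] := hp x; have [[y2 [o2 e2]] c2] := hp y.
have pE v y' : u v - p v = disp u y' -> p v = u (v - y') + y'.
  by move/subr_eq_subr ->; rewrite (linear_subr u_lin).
have u_on_orth v y' z : u v - p v = disp u y' -> orth ip F z ->
    ip (u (v - y')) z = ip (v - y') z.
  move=> e oz; have := (hp v).2 z oz.
  by rewrite (pE v y' e) -{2}(subrK y' v) !(ipDl hip) => /addIr.
have h1 := u_on_orth _ _ _ e1 o2; have h2 := u_on_orth _ _ _ e2 o1.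
have -> : ip x y = ip ((x - y1) + y1) ((y - y2) + y2) by rewrite !subrK.
rewrite (pE _ _ e1) (pE _ _ e2); move: (x - y1) (y - y2) h1 h2 => a1 a2 h1 h2.
rewrite !(ipDl hip) !(ipDr hip) u_iso h1 (ipC hip (u a2) y1) h2.
by rewrite -(ipC hip a2 y1).
Qed.

Lemma pi_value_fixes : fixes p (orth ip F).
Proof. by move=> z hz; apply: pi_value_uniq (hp z) _; split=> //; exists z. Qed.

End PointwiseSolution.

(* Through K = E ∩ F^⊥: the E^⊥-part of z in F^⊥ is fixed by u, and
   its E-part lies in K. *)
Lemma pi_value_exists E : is_fd_subspace E -> subspace_le F E ->
  fixes u (orth ip E) -> forall v, exists w, pi_value u v w.
Proof.
move=> hE hFE u_fixE v.
have hK : is_fd_subspace (fun x => E x /\ orth ip F x).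
  exact: fd_subspace_le hE (subspaceI hE.1 (orth_subspace hip F)) (fun x h => h.1).
have [y [[_ Fy] oy]] := disp_proj_range hip u_lin u_iso hK v.
exists (u v - disp u y); split.
  by exists y; split=> //; rewrite (opprB (u v) (disp u y)) subrKC.
move=> z Fz; apply/eqP; rewrite -subr_eq0 -(ipBl hip) addrAC; apply/eqP.
have [e [Ee oe]] := fd_subspace_proj hip hE z.
have Fe : orth ip F e.
  move=> f hf; have := oe f (hFE f hf).
  by rewrite (ipBl hip) Fz // sub0r => /eqP; rewrite oppr_eq0 => /eqP.
rewrite -(subrK e z) (ipDr hip) -/(disp u v) (oy e (conj Ee Fe)) addr0.
rewrite -(linear_subr (disp_linear u_lin)).
by apply: (disp_orth_fixed hip u_iso); apply: u_fixE.
Qed.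

End PiValue.

Section PiEF.
Variables (R : realType) (V : lmodType R[i]) (ip : V -> V -> R[i]).
Hypothesis hip : is_inner_product ip.

Theorem piEF_exists_unique (E F : V -> Prop) u :
  is_fd_subspace E -> subspace_le F E -> unitary ip u -> fixes u (orth ip E) ->
  exists! p, is_piEF ip F u p.
Proof.
move=> hE hFE [u_lin [g uK gK] u_iso] u_fixE.
have g_lin : linear g by move=> a x y; apply: (can_inj uK); rewrite u_lin !gK.
have g_iso x y : ip (g x) (g y) = ip x y by rewrite -u_iso !gK.
have g_fixE : fixes g (orth ip E) by move=> z hz; rewrite -{1}(u_fixE z hz) uK.
have [p hp] := ClassicalEpsilon.choice _ (pi_value_exists hip u_lin u_iso hE hFE u_fixE).
have [q hq] := ClassicalEpsilon.choice _ (pi_value_exists hip g_lin g_iso hE hFE g_fixE).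
have pK : cancel p q.
  move=> v; exact (pi_value_uniq hip g_lin g_iso (hq (p v)) (pi_value_inv g_lin uK (hp v))).
have qK : cancel q p.
  move=> v; exact (pi_value_uniq hip u_lin u_iso (hp (q v)) (pi_value_inv u_lin gK (hq v))).
exists p; split.
  split; last by move=> x; case: (hp x).
    split; [exact (pi_value_linear hip u_lin u_iso hp) | by exists q |].
    exact (pi_value_isometry hip u_lin u_iso hp).
  exact (pi_value_fixes hip u_lin u_iso hp).
move=> p' hp'; apply: functional_extensionality => v.
exact (pi_value_uniq hip u_lin u_iso (hp v) (pi_value_of_piEF hp' v)).
Qed.

Lemma piEF_trans (F G : V -> Prop) u p q : linear u -> subspace_le G F ->
  is_piEF ip F u p -> is_piEF ip G p q -> is_piEF ip G u q.
Proof.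
move=> u_lin hGF [_ _ p_range] [q_unit q_fix q_range]; split=> // x.
have orthFG y : orth ip F y -> orth ip G y by move=> hy z /hGF; apply: hy.
have [y [Fy ey]] := p_range x; have [z [Gz ez]] := q_range x.
have [y' [Fy' ey']] := p_range z.
exists (y + (z - y')); split.
  have hG := orth_subspace hip G.
  exact (subspaceD hG (orthFG _ Fy) (subspaceB hG Gz (orthFG _ Fy'))).
have -> : u x - q x = (u x - p x) + (p x - q x) by rewrite addrA subrK.
have pz : p z - z = (u z - z) - (u y' - y').
  by rewrite -ey' (opprB (u z)) [RHS]addrC subrKA.
rewrite ey ez pz.
change (disp u y + (disp u z - disp u y') = disp u (y + (z - y'))).
have := disp_linear u_lin 1 y (z - y'); rewrite !scale1r => ->.
by rewrite (linear_subr (disp_linear u_lin)).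
Qed.

End PiEF.

Theorem proposition2p1 (R : realType) (V : lmodType R[i]) (ip : V -> V -> R[i])
  (hH : is_hilbert ip)
  (E F : V -> Prop) (hE : is_fd_subspace E) (hF : is_subspace F)
  (hFE : subspace_le F E)
  (u : V -> V) (hu : unitary ip u) (hufix : fixes u (orth ip E)) :
  (exists! p : V -> V, is_piEF ip F u p) /\
  (forall G : V -> Prop, is_subspace G -> subspace_le G F ->
     forall p : V -> V, is_piEF ip F u p ->
       (unitary ip p /\ fixes p (orth ip F) /\ is_fd_subspace F) /\
       (exists! q : V -> V, is_piEF ip G p q) /\
       (forall q : V -> V, is_piEF ip G p q <-> is_piEF ip G u q)).
Proof.
have [hip _] := hH; have [u_lin _ _] := hu.
split; first exact (piEF_exists_unique hip hE hFE hu hufix).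
move=> G _ hGF p hp; have [p_unit p_fix _] := hp.
have hFd : is_fd_subspace F := fd_subspace_le hE hF hFE.
have hGE : subspace_le G E by move=> x /hGF /hFE.
have piFG := piEF_exists_unique hip hFd hGF p_unit p_fix.
split=> //; split=> // q; split; first exact (piEF_trans hip u_lin hGF hp).
have [q0 [hq0 _]] := piFG; have [r [_ r_uniq]] := piEF_exists_unique hip hE hGE hu hufix.
by move=> hq; rewrite -(r_uniq _ hq) (r_uniq _ (piEF_trans hip u_lin hGF hp hq0)).
Qed.
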